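(* Let $G$ be a subgroup of $S_n$, $\chi$ a character of $G$, $\theta,\tau\in S_n$ and $a,b\in\mathbb{C}$. Then $$d_\chi^G(aP_\theta+bP_\tau)=(a+b)^F\sum_{\sigma\in X(\theta,\tau)\cap G}\overline{\chi(\sigma)}\,a^{\,n-t_\sigma-F}\,b^{\,t_\sigma},$$ where $t_\sigma=n-|\operatorname{Fix}(\theta^{-1}\sigma)|$ and $F=|\operatorname{Fix}(\theta^{-1}\tau)|$.
   Context: $S_n$ is the symmetric group on $[n]=\{1,\dots,n\}$. A character $\chi$ of $G$ is $\chi(g)=\operatorname{tr}\rho(g)$ for a representation $\rho:G\to GL(V)$ on a finite-dimensional complex vector space. The generalized matrix function is $d_\chi^G(A)=\sum_{\sigma\in G}\chi(\sigma)\prod_{i=1}^n A_{i\,\sigma(i)}$ for $A\in M_n(\mathbb{C})$. For $\theta\in S_n$, the permutation matrix $P_\theta$ has $(P_\theta)_{ij}=1$ if $\theta^{-1}(i)=j$ and $0$ otherwise. $\operatorname{Fix}(\pi)$ is the set of fixed points of $\pi$. $X(\theta,\tau)=\{\sigma\in S_n \mid \text{for each } i\in[n],\ \sigma(i)=\theta(i)\text{ or }\sigma(i)=\tau(i)\}$. *)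

From HB Require Import structures.
From mathcomp Require Import all_boot all_order all_algebra all_fingroup.
From mathcomp Require Import mxrepresentation.
Set Implicit Arguments. Unset Strict Implicit. Unset Printing Implicit Defensive.
Import GRing.Theory Num.Theory.
Local Open Scope ring_scope.

Definition pmat (C : nzRingType) (n : nat) (theta : 'S_n) : 'M[C]_n :=
  \matrix_(i, j) ((theta^-1)%g i == j)%:R.

Definition gmf (C : nzRingType) (n : nat) (G : {set 'S_n}) (chi : 'S_n -> C)
  (A : 'M[C]_n) : C :=
  \sum_(s in G) chi s * \prod_(i < n) A i (s i).

Definition Fix (n : nat) (p : 'S_n) : {set 'I_n} := [set i | p i == i].

Definition Xset (n : nat) (theta tau : 'S_n) : {set 'S_n} :=
  [set s : 'S_n | [forall i, (s i == theta i) || (s i == tau i)]].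

(* Composition as functions: (theta^{-1} o s) is (s * theta^-1)%g in MathComp,
   since (p * q) x = q (p x). *)
Definition tcnt (n : nat) (theta s : 'S_n) : nat := (n - #|Fix (s * theta^-1)%g|)%N.

From HB Require Import structures.
From mathcomp Require Import all_boot all_order all_algebra all_fingroup.
From mathcomp Require Import mxrepresentation separable.
Import GRing.Theory Num.Theory.
Local Open Scope ring_scope.

(* Write M = a P_theta + b P_tau.  Since (P_theta)_{i j} = [theta^-1 i = j],
   substituting sigma -> sigma^-1 in d_chi^G(M) and reindexing the product along
   i = sigma j turns the summand into
       chi(sigma^-1) * prod_j (a [sigma j = theta j] + b [sigma j = tau j]).
     Over a numeric closed field these have modulus 1, so their inverses are
     their conjugates; hence tr(A^-1) = conj(tr A), and chi(s^-1) = conj chi(s).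
   - Counting: if h i is f i or g i for every i, then
       prod_i (a [h i = f i] + b [h i = g i]) = (a+b)^|E| a^(|H|-|E|) b^(|I|-|H|)
     with E = {f = g} and H = {h = f}; if some h i is neither, it vanishes.
   With f = theta, g = tau, h = sigma one has |E| = F and |I| - |H| = t_sigma, and
   the theorem follows by summing over G. *)

Lemma unity_root_mul_conj {C : numClosedFieldType} {d : C} {k} :
  (0 < k)%N -> d ^+ k = 1 -> d * d^* = 1.
Proof.
move=> k_gt0 dk1; have /eqP normd1 : `|d| == 1.
  by rewrite -(pexpr_eq1 k_gt0) // -normrX dk1 normr1.
by rewrite -normCK normd1 expr1n.
Qed.

Lemma separable_Xn_sub1 (F : fieldType) k :
  k%:R != 0 :> F -> separable_poly ('X^k - 1 : {poly F}).
Proof.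
move=> kF_neq0; have k_gt0 : (0 < k)%N by case: k kF_neq0; rewrite ?eqxx.
rewrite unlock; apply/Bezout_coprimepP; exists (-1, k%:R^-1 *: 'X) => /=.
rewrite derivB derivXn derivC subr0 -scalerAl mulrnAr -scaler_nat scalerA.
by rewrite mulVf // scale1r -exprS prednK // mulN1r opprB subrK eqpxx.
Qed.

Lemma finite_order_diagonal {F : closedFieldType} {m} {A : 'M[F]_m.+1} {k} :
  k%:R != 0 :> F -> A ^+ k = 1 ->
  exists P d, [/\ P \in unitmx, A = invmx P *m diag_mx d *m P
                & forall j, d 0 j ^+ k = 1].
Proof.
move=> kF_neq0 Ak1; have k_gt0 : (0 < k)%N by case: k kF_neq0 Ak1; rewrite ?eqxx.
have [rs Xk1E] := closed_field_poly_normal ('X^k - 1 : {poly F}).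
rewrite lead_coefXnsubC // scale1r in Xk1E.
have rs_uniq : uniq rs.
  by rewrite -separable_prod_XsubC -Xk1E separable_Xn_sub1.
have minA_dvd : mxminpoly A %| 'X^k - 1.
  apply: mxminpoly_min.
  by rewrite rmorphB rmorphXn /= horner_mx_X rmorph1 Ak1 subrr.
have [P P_unit] : diagonalizable A.
  by apply/diagonalizableP; exists rs; rewrite // -Xk1E.
move=> /diagonalizable_forPex [d simAd]; exists P, d; split => //.
  by rewrite -mulmxA -(simmxP P_unit simAd) mulKmx.
move=> j; have : root ('X^k - 1) (d 0 j).
  apply: root_dvdp minA_dvd _.
  rewrite (simmx_minpoly P_unit simAd) mxminpoly_diag root_prod_XsubC mem_undup.
  by apply: map_f; rewrite mem_enum.
by rewrite rootE !hornerE subr_eq0 => /eqP.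
Qed.

(* The trace of the inverse of a matrix of finite order is the conjugate of
   its trace: the diagonal of inverses is the conjugate diagonal. *)
Lemma tr_invmx_finite_order {C : numClosedFieldType} {m} {A : 'M[C]_m.+1} {k} :
  (0 < k)%N -> A ^+ k = 1 -> \tr (invmx A) = (\tr A)^*.
Proof.
move=> k_gt0 Ak1; have kC_neq0 : k%:R != 0 :> C by rewrite pnatr_eq0 -lt0n.
have [P [d [P_unit -> dk1]]] := finite_order_diagonal kC_neq0 Ak1.
pose dc := \row_j (d 0 j)^*.
have d_dc : diag_mx d *m diag_mx dc = 1%:M.
  apply/matrixP => i j; rewrite mul_diag_mx !mxE.
  have [->|_] := eqVneq i j; last by rewrite !mulr0n mulr0.
  by rewrite !mulr1n (unity_root_mul_conj k_gt0 (dk1 j)).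
have invA : invmx (invmx P *m diag_mx d *m P) = invmx P *m diag_mx dc *m P.
  have AB1 : invmx P *m diag_mx d *m P *m (invmx P *m diag_mx dc *m P) = 1%:M.
    by rewrite !mulmxA mulmxK // -(mulmxA (invmx P)) d_dc mulmx1 mulVmx.
  have [A_unit _] := mulmx1_unit AB1.
  by rewrite -[RHS](mulKmx A_unit) AB1 mulmx1.
rewrite invA mxtrace_mulC (mxtrace_mulC (invmx P *m _)) !mulmxA mulmxV //.
rewrite !mul1mx !mxtrace_diag rmorph_sum.
by apply: eq_bigr => j _; rewrite mxE.
Qed.

Lemma repr_trace_inv (C : numClosedFieldType) (gT : finGroupType)
    (G : {group gT}) m (rG : mx_representation C G m) x :
  x \in G -> \tr (rG x^-1%g) = (\tr (rG x))^*.
Proof.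
move=> Gx; rewrite repr_mxV //; case: m rG => [|m] rG.
  by rewrite /mxtrace !big_ord0 conjC0.
apply: (tr_invmx_finite_order (order_gt0 x)).
by rewrite -repr_mxX // expg_order repr_mx1.
Qed.

Section TwoChoiceProduct.

Variables (R : comPzSemiRingType) (I : finType) (T : eqType) (f g h : I -> T).
Variables (a b : R).

Definition choice_factor (i : I) : R := a * (h i == f i)%:R + b * (h i == g i)%:R.

Lemma prod_choice_factor_out :
  (exists i, (h i != f i) && (h i != g i)) -> \prod_i choice_factor i = 0.
Proof.
case=> i /andP[/negbTE hf /negbTE hg]; rewrite (bigD1 i) //=.
by rewrite /choice_factor hf hg !mulr0 addr0 mul0r.
Qed.

(* Otherwise the factors are a + b on E = {f = g}, a on H :\: E where
   H = {h = f} (E is contained in H), and b off H. *)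
Lemma prod_choice_factor :
  (forall i, (h i == f i) || (h i == g i)) ->
  let E := [set i | f i == g i] in let H := [set i | h i == f i] in
  \prod_i choice_factor i = (a + b) ^+ #|E| * a ^+ (#|H| - #|E|) * b ^+ (#|I| - #|H|).
Proof.
move=> hfg E H.
have EH : E \subset H.
  apply/subsetP => i; rewrite !inE => /eqP fg.
  by case/orP: (hfg i) => //; rewrite fg.
have hE i : i \in E -> choice_factor i = a + b.
  move=> iE; have := subsetP EH i iE; rewrite !inE in iE * => /eqP hf.
  by rewrite /choice_factor hf (eqP iE) eqxx !mulr1.
have hHE i : i \in H :\: E -> choice_factor i = a.
  rewrite !inE /choice_factor => /andP[fg /eqP hf].
  by rewrite hf eqxx (negbTE fg) mulr1 mulr0 addr0.
have hHc i : i \in ~: H -> choice_factor i = b.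
  rewrite !inE /choice_factor => /negbTE hf.
  by move: (hfg i); rewrite hf /= => ->; rewrite mulr0 add0r mulr1.
rewrite (eq_bigl [in [set: I]]) => [|i]; last by rewrite inE.
rewrite (big_setID H) setTI (big_setID E) (setIidPr EH) setTD.
rewrite (eq_bigr _ hE) (eq_bigr _ hHE) (eq_bigr _ hHc) !prodr_const.
by rewrite cardsD (setIidPr EH) [#|~: H|]cardsCs setCK.
Qed.

End TwoChoiceProduct.

Lemma permV_eq n (p : 'S_n) x j : ((p^-1)%g x == j) = (x == p j).
Proof. by apply/eqP/eqP => [<-|->]; rewrite ?permKV ?permK. Qed.

Lemma card_Fix_mulV n (p q : 'S_n) : #|Fix (p * q^-1)%g| = #|[set i | p i == q i]|.
Proof. by apply: eq_card => i; rewrite !inE permM permV_eq. Qed.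

Lemma comb_pmat_entry (R : nzRingType) n (theta tau s : 'S_n) (a b : R) j :
  (a *: pmat R theta + b *: pmat R tau) (s j) j =
  a * (s j == theta j)%:R + b * (s j == tau j)%:R.
Proof. by rewrite !mxE !permV_eq. Qed.

Lemma prod_comb_pmat (R : comNzRingType) n (theta tau s : 'S_n) (a b : R) :
  let F := #|Fix (tau * theta^-1)%g| in
  \prod_(i < n) (a *: pmat R theta + b *: pmat R tau) i ((s^-1)%g i) =
  if s \in Xset theta tau then
    (a + b) ^+ F * a ^+ (n - tcnt theta s - F) * b ^+ tcnt theta s
  else 0.
Proof.
move=> F; rewrite (reindex_inj (@perm_inj _ s)) /=.
under eq_bigr => j _ do rewrite permK comb_pmat_entry.
rewrite inE; case: forallP => [sX | /forallP/forallPn sX]; last first.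
  by apply: prod_choice_factor_out; case: sX => i; rewrite negb_or; exists i.
rewrite prod_choice_factor // /F /tcnt !card_Fix_mulV card_ord.
have -> : [set i | tau i == theta i] = [set i | theta i == tau i].
  by apply/setP => i; rewrite !inE eq_sym.
by rewrite subKn // -[X in (_ <= X)%N]card_ord max_card.
Qed.

Theorem theorem3p2 (C : numClosedFieldType) (n : nat) (G : {group 'S_n})
    (m : nat) (rG : mx_representation C G m) (theta tau : 'S_n) (a b : C) :
  let chi := fun g : 'S_n => \tr (rG g) in
  let F := #|Fix (tau * theta^-1)%g| in
  gmf G chi (a *: pmat C theta + b *: pmat C tau) =
    (a + b) ^+ F *
    \sum_(s in Xset theta tau :&: G)
       (chi s)^* * a ^+ (n - tcnt theta s - F) * b ^+ (tcnt theta s).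
Proof.
move=> chi F; rewrite /gmf (reindex_inj invg_inj) /=.
rewrite (eq_bigl [in G]) => [|s]; last by rewrite groupV.
rewrite mulr_sumr [RHS](eq_bigl (fun s => (s \in G) && (s \in Xset theta tau)));
  last by move=> s; rewrite in_setI andbC.
rewrite big_mkcondr /=; apply: eq_bigr => s Gs.
rewrite prod_comb_pmat /chi repr_trace_inv // -/F.
case: ifP => _; last by rewrite mulr0.
by rewrite !mulrA (mulrC (\tr (rG s))^*).
Qed.
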